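(* Let $\mathbb L$ be an infinite set. The family $\mathcal Q=\{Q^<_{AB}: A,B\in\mathbb W,\ |A|<|B|\}\cup\{C(d):d\in\mathbb I\}$, where $Q^<_{AB}=\{i\in\mathbb I:|A_i|<|B_i|\}$ and $C(d)=\{i\in\mathbb I: d\subseteq i\}$, has the finite intersection property. Consequently there is a fine ultrafilter $\mathcal U\supseteq\mathcal Q$ on $\mathbb I$, and for any such $\mathcal U$ the finitely approximable numerosity theory $\preceq_{\mathcal U}$ (defined by $A\preceq_{\mathcal U}B$ iff $\{i\in\mathbb I:|A_i|\le|B_i|\}\in\mathcal U$) satisfies the Weak Hume Principle: for all $A,B\in\mathbb W$, if $A\preceq_{\mathcal U}B$ then there is an injective map $f:A\to B$ (equivalently, $|A|\le|B|$).
   Context: A point over $\mathbb L$ is either an element of $\mathbb L$ or a finite tuple $(x_1,\dots,x_n)$, $n\ge1$, of points over $\mathbb L$ ($\mathbb L$ contains no tuples of points); $P$ is the set of all points; $supp(x)=\{x\}$ for $x\in\mathbb L$ and $supp(x_1,\dots,x_n)=\bigcup_k supp(x_k)$. $\mathbb W$ is the family of finitary point sets: $A\subseteq P$ such that $\{a\in A:supp(a)=i\}$ is finite for every finite $i\subseteq\mathbb L$. $\mathbb I=[\mathbb L]^{<\omega}$ is the set of finite subsets of $\mathbb L$, and $A_i=\{a\in A:supp(a)\subseteq i\}$. A filter on $\mathbb I$ is fine if it contains every cone $C(d)$, $d\in\mathbb I$. *)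

From mathcomp Require Import all_boot.
From mathcomp Require Import boolp classical_sets cardinality.
Set Implicit Arguments.
Unset Strict Implicit.
Unset Printing Implicit Defensive.
Local Open Scope classical_set_scope.

Section Points.
Variable L : Type.

(* Points over L: atoms of L, or finite tuples (x_1,...,x_n), n >= 1,
   represented as head x_1 followed by the list [x_2; ...; x_n]. *)
Inductive lpoint : Type :=
| Atom : L -> lpoint
| Tup : lpoint -> list lpoint -> lpoint.

Fixpoint supp (p : lpoint) : set L :=
  match p with
  | Atom x => [set x]
  | Tup q qs =>
      supp q `|` (fix go (l : list lpoint) : set L :=
                    match l with
                    | nil => set0
                    | r :: rs => supp r `|` go rs
                    end) qs
  end.

Definition finitary (A : set lpoint) : Prop :=
  forall i : set L, finite_set i -> finite_set [set a | A a /\ supp a = i].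

Definition Idx : Type := {i : set L | finite_set i}.

Definition restr (A : set lpoint) (i : Idx) : set lpoint :=
  [set a | A a /\ supp a `<=` proj1_sig i].

Definition card_leq (A B : set lpoint) : Prop := (A #<= B)%card.
Definition card_lt (A B : set lpoint) : Prop := (A #<= B)%card /\ ~ (B #<= A)%card.

Definition Qlt (A B : set lpoint) : set Idx :=
  [set i | card_lt (restr A i) (restr B i)].
Definition cone (d : Idx) : set Idx :=
  [set i | proj1_sig d `<=` proj1_sig i].

Definition Qfam : set (set Idx) :=
  [set X | (exists A B, [/\ finitary A, finitary B, card_lt A B & X = Qlt A B])
           \/ (exists d, X = cone d)].

Definition num_le (U : set (set Idx)) (A B : set lpoint) : Prop :=
  U [set i | card_leq (restr A i) (restr B i)].

End Points.

Definition fip (T : Type) (F : set (set T)) : Prop :=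
  forall (n : nat) (X : nat -> set T), (forall k, (k < n)%N -> F (X k)) ->
    exists t : T, forall k, (k < n)%N -> X k t.

Definition is_ultrafilter (T : Type) (U : set (set T)) : Prop :=
  [/\ U setT, ~ U set0,
      (forall X Y, U X -> U Y -> U (X `&` Y)),
      (forall X Y, U X -> X `<=` Y -> U Y)
    & (forall X, U X \/ U (~` X))].

Definition fine (L : Type) (U : set (set (Idx L))) : Prop :=
  forall d : Idx L, U (cone d).

From mathcomp Require Import all_boot.
From mathcomp Require Import boolp classical_sets cardinality functions filter.
From Stdlib Require List.

Set Implicit Arguments.
Unset Strict Implicit.
Unset Printing Implicit Defensive.
Local Open Scope classical_set_scope.

(* For points, a pigeonhole argument ([infinite_fibre]) shows that an
   infinite set [B] larger than [A] has infinitely many elements meeting the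
   support of [A] in the same finite set; adding their supports to an index
   enlarges the restriction of [B] without changing that of [A]
   ([grow_index], [restr_stable]).  Adding the constraints [|A| < |B|] one by
   one, largest [B] first, shows that finitely many of them hold together on
   a cone ([approximable_all]): this is the finite intersection property of
   [Qfam].  An ultrafilter containing [Qfam] then exists, and the Weak Hume
   Principle follows from comparability: if [A] does not inject into [B],
   then [Qlt B A] is in the ultrafilter, contradicting [A <=_U B].
   Of the hypothesis that [L] is infinite, only the existence of an atom is
   used, to supply default points. *)

Definition injle {T U} (X : set T) (Y : set U) : Prop :=
  exists f : T -> U, (forall x, X x -> Y (f x)) /\
    (forall x y, X x -> X y -> f x = f y -> x = y).

Lemma injle_refl T (X : set T) : injle X X.
Proof. by exists id. Qed.

Lemma injle_trans T U V (X : set T) (Y : set U) (Z : set V) :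
  injle X Y -> injle Y Z -> injle X Z.
Proof.
move=> [f [fXY f_inj]] [g [gYZ g_inj]]; exists (g \o f); split=> [x Xx|x y Xx Xy gfxy].
  exact/gYZ/fXY.
by apply: f_inj => //; apply: g_inj => //; apply: fXY.
Qed.

Lemma injle_sub T (X Y : set T) : X `<=` Y -> injle X Y.
Proof. by move=> XY; exists id; split=> // x /XY. Qed.

Lemma choice_on T U (y0 : U) (G : set (T * U)) (D : set T) :
  (forall x, D x -> exists y, G (x, y)) ->
  exists f : T -> U, forall x, D x -> G (x, f x).
Proof.
move=> DG; exists (fun x => if pselect (exists y, G (x, y)) is left h
                           then projT1 (cid h) else y0).
by move=> x Dx; case: pselect => [h|/(_ (DG x Dx))//]; exact: projT2 (cid h).
Qed.

Lemma injle_image T U (x0 : T) (f : T -> U) (A : set T) : injle (f @` A) A.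
Proof.
have preim y : (f @` A) y -> exists x, [set p | A p.2 /\ f p.2 = p.1] (y, x).
  by move=> [x Ax <-]; exists x.
have [g gP] := choice_on x0 preim.
exists g; split=> [y /gP[]//|y y' /gP[_ gy] /gP[_ gy'] gyy'].
by rewrite /= in gy gy'; rewrite -gy -gy' gyy'.
Qed.

Lemma chain_common T (F : set (set T)) u v : total_on F subset ->
  (\bigcup_(G in F) G) u -> (\bigcup_(G in F) G) v ->
  exists2 G, F G & G u /\ G v.
Proof.
move=> Ftot [G FG Gu] [H FH Hv].
by case: (Ftot G H FG FH) => [GH|HG]; [exists H => //; split=> //; exact: GH|
                                      exists G => //; split=> //; exact: HG].
Qed.

(* Comparability of cardinals: a maximal partial injection between X and Y
   (Zorn's lemma) is defined on all of X or onto all of Y. *)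
Lemma injle_total T U (x0 : T) (y0 : U) (X : set T) (Y : set U) :
  injle X Y \/ injle Y X.
Proof.
pose pinj := [set G : set (T * U) | G `<=` X `*` Y /\
  (forall x y y', G (x, y) -> G (x, y') -> y = y') /\
  (forall x x' y, G (x, y) -> G (x', y) -> x = x')].
have [G [[GXY [Gfun Ginj]] Gmax]] : exists G, pinj G /\ forall H, G `<` H -> ~ pinj H.
  apply: Zorn_bigcup => F Fpinj Ftot; split; [|split].
  - by move=> p [G FG Gp]; have [+ _] := Fpinj G FG; apply.
  - move=> x y y' /(chain_common Ftot)/[apply] -[G /Fpinj[_ [Gfun _]] [Gy Gy']].
    exact: Gfun Gy Gy'.
  - move=> x x' y /(chain_common Ftot)/[apply] -[G /Fpinj[_ [_ Ginj]] [Gx Gx']].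
    exact: Ginj Gx Gx'.
have [Xdom|] := pselect (forall x, X x -> exists y, G (x, y)).
  left; have [f fG] := choice_on y0 Xdom; exists f; split.
    by move=> x Xx; have [] := GXY _ (fG x Xx).
  by move=> x x' Xx Xx' fxx'; apply: (Ginj x x' (f x)); [exact: fG|rewrite fxx'; exact: fG].
move=> /existsNP[x1 /not_implyP[Xx1 x1_free]]; right.
suff Ydom : forall y, Y y -> exists x, [set p : U * T | G (p.2, p.1)] (y, x).
  have [g gG] := choice_on x0 Ydom; exists g; split.
    by move=> y Yy; have [] := GXY _ (gG y Yy).
  by move=> y y' Yy Yy' gyy'; apply: (Gfun (g y)); [exact: gG|rewrite gyy'; exact: gG].
move=> y Yy; apply: contrapT => y_free; apply: (Gmax (G `|` [set (x1, y)])).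
  split=> [p Gp|/(_ (x1, y) (or_intror erefl)) Gx1y]; first by left.
  by apply: x1_free; exists y.
split; [|split].
- by move=> p [/GXY//|->].
- move=> x a b [Gxa|/pair_equal_spec[-> ->]] [Gxb|/pair_equal_spec[ex ->]].
  + exact: Gfun Gxa Gxb.
  + by exfalso; apply: x1_free; exists a; rewrite -ex.
  + by exfalso; apply: x1_free; exists b.
  + by [].
- move=> a b z [Gaz|/pair_equal_spec[-> ->]] [Gbz|/pair_equal_spec[-> ez]].
  + exact: Ginj Gaz Gbz.
  + by exfalso; apply: y_free; exists a; rewrite -ez.
  + by exfalso; apply: y_free; exists b.
  + by [].
Qed.

Lemma injle_card T U (y0 : U) (X : set T) (Y : set U) :
  injle X Y <-> (X #<= Y)%card.
Proof.
split=> [[f [fXY f_inj]]|/card_leP[g]].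
  have [h] : $|{injfun X >-> Y}|.
    apply/injfunPex; exists f; first by move=> x /fXY.
    by move=> x y /set_mem Xx /set_mem Xy; apply: f_inj.
  exact: inj_card_le.
have /injfunPex[h _ h_inj] : $|{injfun [set: X] >-> [set: Y]}| by squash g.
exists (fun x => if pselect (X x) is left Xx
                 then val (h (exist _ x (mem_set Xx))) else y0).
split=> [x Xx|x x' Xx Xx'].
  by case: pselect => // Xx'; exact: set_mem (valP (h (exist _ x (mem_set Xx')))).
case: pselect => // Xx1; case: pselect => // Xx1' hxx'.
have := h_inj (exist _ x (mem_set Xx1)) (exist _ x' (mem_set Xx1')).
by move=> /(_ (mem_set I) (mem_set I) (val_inj hxx')) [].
Qed.
Arguments injle_card {T U} y0 {X Y}.

Definition pairing T (Y : set T) (p : T -> T -> T) : Prop :=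
  (forall x y, Y x -> Y y -> Y (p x y)) /\
  (forall x y x' y', Y x -> Y y -> Y x' -> Y y' -> p x y = p x' y' ->
     x = x' /\ y = y').

Lemma pairing_setU T (Y S : set T) pf a b : pairing Y pf -> Y a -> Y b ->
  a <> b -> injle S Y -> injle (Y `|` S) Y.
Proof.
move=> [pfY pf_inj] Ya Yb ab [k [kS k_inj]].
exists (fun u => if pselect (Y u) then pf a u else pf b (k u)); split.
  by move=> u YSu; case: pselect => [Yu|nYu]; apply: pfY; case: YSu => // /kS.
move=> u v YSu YSv; case: pselect => Yu; case: pselect => Yv.
- by move=> /pf_inj[].
- have Skv : Y (k v) by apply: kS; case: YSv.
  by move=> /pf_inj[] // ab'; case: ab.
- have Sku : Y (k u) by apply: kS; case: YSu.
  by move=> /pf_inj[] // ba; case: ab.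
- have [Su Sv] : S u /\ S v by case: YSu; case: YSv.
  by move=> /pf_inj[] //; [exact: kS|exact: kS|move=> _ /k_inj; apply].
Qed.

Lemma pairing_transfer T (X Y : set T) pf : pairing Y pf -> Y `<=` X ->
  injle X Y -> exists p, pairing X p.
Proof.
move=> [pfY pf_inj] YX [m [mY m_inj]].
exists (fun x y => pf (m x) (m y)); split=> [x y Xx Xy|x y x' y' Xx Xy Xx' Xy'].
  by apply/YX/pfY; exact: mY.
by move=> /pf_inj[]; try exact: mY; move=> /m_inj-> // /m_inj->.
Qed.

Section PairingGraphs.
Variables (T : Type) (X : set T).

(* Partial pairing functions, viewed as graphs [G] of triples [((x, y), z)];
   such graphs ordered by inclusion are amenable to Zorn's lemma. *)
Definition gdom (G : set ((T * T) * T)) : set T :=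
  [set x | exists z, G ((x, x), z)].

Record pgraph (G : set ((T * T) * T)) : Prop := {
  pg_fun : forall q z z', G (q, z) -> G (q, z') -> z = z';
  pg_inj : forall q q' z, G (q, z) -> G (q', z) -> q = q';
  pg_closed : forall x y z, G ((x, y), z) ->
    [/\ gdom G x, gdom G y & gdom G z];
  pg_total : forall x y, gdom G x -> gdom G y -> exists z, G ((x, y), z);
  pg_sub : gdom G `<=` X }.

Lemma gdomS G H : G `<=` H -> gdom G `<=` gdom H.
Proof. by move=> GH x [z Gz]; exists z; exact: GH. Qed.

Lemma pgraph_chain (F : set (set ((T * T) * T))) :
  F `<=` pgraph -> total_on F subset -> pgraph (\bigcup_(G in F) G).
Proof.
move=> Fpg Ftot; have FU G : F G -> G `<=` \bigcup_(G in F) G.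
  by move=> FG p Gp; exists G.
split.
- move=> q z z' /(chain_common Ftot)/[apply] -[G /Fpg Gpg [Gz Gz']].
  exact: pg_fun Gz Gz'.
- move=> q q' z /(chain_common Ftot)/[apply] -[G /Fpg Gpg [Gq Gq']].
  exact: pg_inj Gq Gq'.
- move=> x y z [G FG Gxyz]; have [Gx Gy Gz] := pg_closed (Fpg _ FG) Gxyz.
  by have GU := gdomS (FU _ FG); split; apply: GU.
- move=> x y [zx Uzx] [zy Uzy].
  have [G FG [Gx Gy]] := chain_common Ftot Uzx Uzy.
  have [z Gz] := pg_total (Fpg _ FG) (ex_intro _ zx Gx) (ex_intro _ zy Gy).
  by exists z; exists G.
- by move=> x [z [G FG Gz]]; apply: (pg_sub (Fpg _ FG)); exists z.
Qed.

Lemma pgraph_pairing (t0 : T) G : pgraph G ->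
  exists2 pf, pairing (gdom G) pf &
    forall x y, gdom G x -> gdom G y -> G ((x, y), pf x y).
Proof.
move=> Gpg; have Gtot q : (gdom G `*` gdom G) q -> exists z, G (q, z).
  by case: q => x y [Gx Gy]; exact: pg_total Gx Gy.
have [f fG] := choice_on t0 Gtot.
exists (fun x y => f (x, y)) => [|x y Gx Gy]; last exact: fG.
split=> [x y Gx Gy|x y x' y' Gx Gy Gx' Gy' fxy].
  by have [] := pg_closed Gpg (fG (x, y) (conj Gx Gy)).
have := pg_inj Gpg (fG (x, y) (conj Gx Gy)).
by rewrite fxy => /(_ _ (fG (x', y') (conj Gx' Gy'))) [-> ->].
Qed.

Section Adjoin.
Variables (G : set ((T * T) * T)) (Z : set T) (k : T -> T -> T).
Let Y := gdom G.
Let YZ := Y `|` Z.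
Hypotheses (Gpg : pgraph G) (ZX : Z `<=` X `\` Y)
  (kZ : forall u v, YZ u -> YZ v -> Z (k u v))
  (k_inj : forall u v u' v', YZ u -> YZ v -> YZ u' -> YZ v' ->
     k u v = k u' v' -> u = u' /\ v = v').

Definition adjoin : set ((T * T) * T) := G `|`
  [set q | [/\ YZ q.1.1, YZ q.1.2, ~ (Y q.1.1 /\ Y q.1.2) & q.2 = k q.1.1 q.1.2]].

Lemma gdom_adjoin : gdom adjoin = YZ.
Proof.
apply/seteqP; split=> [x [z [Gz|[YZx _ _ _]]]|x [[z Gz]|Zx]] //.
- by left; exists z.
- by exists z; left.
- exists (k x x); right; split=> //=; [right|right|] => //.
  by move=> [Yx _]; have [_] := ZX Zx.
Qed.

Lemma pgraph_adjoin : pgraph adjoin.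
Proof.
have ZnY z : Z z -> ~ Y z by move=> /ZX[].
have GY x y z : G ((x, y), z) -> [/\ Y x, Y y & Y z] by apply: pg_closed.
split.
- move=> [u v] z z' [Gz|[_ _ /= uv ->]] [Gz'|[_ _ /= uv' ->]] //.
  + exact: pg_fun Gz Gz'.
  + by have [Yu Yv _] := GY _ _ _ Gz; case: uv'.
  + by have [Yu Yv _] := GY _ _ _ Gz'; case: uv.
- move=> [u v] [u' v'] z [Gz|[/= YZu YZv _ ez]] [Gz'|[/= YZu' YZv' _ ez']].
  + exact: pg_inj Gz Gz'.
  + have [_ _ Yz] := GY _ _ _ Gz.
    by case: (ZnY z) => //; rewrite ez'; exact: kZ.
  + have [_ _ Yz] := GY _ _ _ Gz'.
    by case: (ZnY z) => //; rewrite ez; exact: kZ.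
  + by rewrite ez' in ez; have [-> ->] := k_inj YZu' YZv' YZu YZv ez.
- rewrite gdom_adjoin => x y z [Gz|[/= YZx YZy _ ->]]; last by split=> //; right; exact: kZ.
  by have [Yx Yy Yz] := GY _ _ _ Gz; split; left.
- rewrite gdom_adjoin => x y YZx YZy.
  have [[Yx Yy]|nYxy] := pselect (Y x /\ Y y).
    by have [z Gz] := pg_total Gpg Yx Yy; exists z; left.
  by exists (k x y); right.
- by rewrite gdom_adjoin => x [Yx|/ZX[]]; [exact: (pg_sub Gpg)|].
Qed.

End Adjoin.
End PairingGraphs.

Lemma nat_embedding T (X : set T) : infinite_set X ->
  exists e : nat -> T, (forall n, X (e n)) /\ injective e.
Proof.
move=> Xinf; have [x0 _] := infinite_setN0 Xinf.
have [e [eX e_inj]] : injle [set: nat] X by exact/(injle_card x0)/infiniteP.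
by exists e; split=> [n|m n]; [exact: eX|exact: e_inj].
Qed.

Definition npair (m n : nat) : nat := CodeSeq.code [:: m; n].
Arguments npair : simpl never.

Lemma npair_inj m n m' n' : npair m n = npair m' n' -> m = m' /\ n = n'.
Proof. by move=> /(congr1 CodeSeq.decode); rewrite !CodeSeq.codeK => -[-> ->]. Qed.

Section Hessenberg.
Variables (T : Type) (X : set T) (e : nat -> T).
Hypotheses (eX : forall n, X (e n)) (e_inj : injective e).

(* The pairing graph transported from the Cantor pairing of [nat] along [e]:
   it guarantees that the domains below contain the distinct tags [e n]. *)
Definition G0 : set ((T * T) * T) :=
  [set q | exists m n, q = ((e m, e n), e (npair m n))].

Lemma gdom_G0 x : gdom G0 x <-> exists n, x = e n.
Proof.
split=> [[z [m [n [-> _ _]]]]|[n ->]]; first by exists m.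
by exists (e (npair n n)); exists n, n.
Qed.

Lemma pgraph_G0 : pgraph X G0.
Proof.
split.
- by move=> q z z' [m [n [-> ->]]] [m' [n' [/e_inj-> /e_inj-> ->]]].
- by move=> q q' z [m [n [-> ->]]] [m' [n' [-> /e_inj/npair_inj[-> ->]]]].
- move=> x y z [m [n [-> -> ->]]].
  by split; apply/gdom_G0; eexists.
- move=> x y /gdom_G0[m ->] /gdom_G0[n ->].
  by exists (e (npair m n)); exists m, n.
- by move=> x /gdom_G0[n ->].
Qed.

(* Maximality step: if the domain [Y] of a pairing graph injects into
   [X \ Y], then the graph extends properly, by adjoining a copy of [Y]. *)
Lemma pgraph_extend G : pgraph X G -> G0 `<=` G ->
  injle (gdom G) (X `\` gdom G) -> exists2 G', pgraph X G' & G `<` G'.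
Proof.
move=> Gpg G0G [g [gYX g_inj]]; set Y := gdom G.
have Ye n : Y (e n) by apply: gdomS G0G _ _; apply/gdom_G0; exists n.
have [pf [pfY pf_inj] _] := pgraph_pairing (e 0) Gpg.
set Z := g @` Y; have ZXY : Z `<=` X `\` Y by move=> _ [y Yy <-]; exact: gYX.
have [r [rY r_inj]] : injle (Y `|` Z) Y.
  apply: pairing_setU (conj pfY pf_inj) (Ye 0) (Ye 1) _ (injle_image (e 0) g Y).
  by move=> /e_inj.
pose k u v := g (pf (r u) (r v)).
have kY u v : (Y `|` Z) u -> (Y `|` Z) v -> Y (pf (r u) (r v)).
  by move=> YZu YZv; apply: pfY; exact: rY.
have kZ u v : (Y `|` Z) u -> (Y `|` Z) v -> Z (k u v).
  by move=> YZu YZv; exists (pf (r u) (r v)) => //; exact: kY.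
have k_inj u v u' v' : (Y `|` Z) u -> (Y `|` Z) v -> (Y `|` Z) u' ->
    (Y `|` Z) v' -> k u v = k u' v' -> u = u' /\ v = v'.
  move=> YZu YZv YZu' YZv' /(g_inj _ _ (kY _ _ YZu YZv) (kY _ _ YZu' YZv')).
  by move=> /pf_inj[]; try exact: rY; move=> /r_inj-> // /r_inj->.
exists (adjoin G Z k); first exact: pgraph_adjoin.
split=> [q Gq|GZ]; first by left.
have Ze : Z (g (e 0)) by exists (e 0).
have [Yg _ _] : [/\ Y (g (e 0)), Y (g (e 0)) & Y (k (g (e 0)) (g (e 0)))].
  apply: (pg_closed Gpg); apply: GZ; right; split=> //=; [right|right|] => //.
  by move=> [Yg _]; have [] := ZXY _ Ze.
by have [] := ZXY _ Ze.
Qed.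

End Hessenberg.

(* Zorn's lemma yields a maximal pairing graph [M] extending [G0]; by
   maximality [X \ dom M] injects into [dom M], which then absorbs [X]. *)
Theorem hessenberg T (X : set T) : infinite_set X -> exists p, pairing X p.
Proof.
move=> Xinf; have [x0 _] := infinite_setN0 Xinf.
have [e [eX e_inj]] := nat_embedding Xinf.
pose P G := pgraph X G /\ (G = set0 \/ G0 e `<=` G).
have [M [[Mpg Mbase] Mmax]] : exists M, P M /\ forall H, M `<` H -> ~ P H.
  apply: Zorn_bigcup => F FP Ftot; split.
    by apply: pgraph_chain Ftot => G /FP[].
  have [[G FG G0G]|noG0] := pselect (exists2 G, F G & G0 e `<=` G).
    by right=> q G0q; exists G => //; exact: G0G.
  left; apply/seteqP; split=> // q [G FG Gq].
  have [_ [G_0|G0G]] := FP G FG; first by rewrite G_0 in Gq.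
  by case: noG0; exists G.
have G0M : G0 e `<=` M.
  case: Mbase => // M_0; exfalso; apply: (Mmax (G0 e)); last first.
    by split; [exact: (pgraph_G0 eX e_inj)|right].
  rewrite M_0; split=> // /(_ ((e 0, e 0), e (npair 0 0))).
  by apply; exists 0, 0.
have Ye n : gdom M (e n) by apply: gdomS G0M _ _; apply/gdom_G0; exists n.
have [pf pfM _] := pgraph_pairing (e 0) Mpg.
apply: (pairing_transfer pfM (pg_sub Mpg)).
have [YXY|XYY] := injle_total x0 x0 (gdom M) (X `\` gdom M).
  have [G' G'pg MG'] := pgraph_extend e_inj Mpg G0M YXY.
  case: (Mmax G' MG'); split=> //; right.
  by apply: subset_trans G0M _; case: MG'.
apply: injle_trans (pairing_setU pfM (Ye 0) (Ye 1) _ XYY).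
  by apply: injle_sub => x Xx; have [Yx|nYx] := pselect (gdom M x); [left|right].
by move=> /e_inj.
Qed.

Lemma finite_enum T (A : set T) : finite_set A ->
  exists s : seq T, forall x, A x <-> List.In x s.
Proof.
move=> [n]; elim: n A => [|n IH] A.
  by rewrite II0 card_eq0 => /eqP->; exists [::].
move=> /eq_cardSP[x Ax /IH[s sP]]; exists (x :: s) => y; split=> [Ay|/= [<-//|/sP[]//]].
by have [->|yx] := pselect (y = x); [left|right; apply/sP].
Qed.

Lemma finite_powerset T (W : set T) : finite_set W ->
  finite_set [set F | F `<=` W].
Proof.
move=> [n]; elim: n W => [|n IH] W.
  rewrite II0 card_eq0 => /eqP->.
  rewrite (_ : [set F | F `<=` set0] = [set set0]); first exact: finite_set1.
  by apply/seteqP; split=> F /=; [rewrite subset0|move=> ->].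
move=> /eq_cardSP[x Wx /IH fin].
apply: (@sub_finite_set _ _ ([set F | F `<=` W `\ x] `|`
   (fun G => x |` G) @` [set F | F `<=` W `\ x])).
  move=> F FW; have [Fx|nFx] := pselect (F x).
    by right; exists (F `\ x); [move=> y [/FW]|exact: setD1K].
  by left=> y Fy; split; [exact: FW|move=> yx; apply: nFx; rewrite -yx].
by rewrite finite_setU; split=> //; apply: finite_image.
Qed.

Section InfiniteTarget.
Variables (U : Type) (X : set U).
Hypothesis Xinf : infinite_set X.

Let u0 : U := projT1 (cid (infinite_setN0 Xinf)).

Lemma finite_injle T (S : set T) : finite_set S -> injle S X.
Proof.
move=> /finite_set_leP[n Sn]; apply/(injle_card u0).
apply: card_le_trans Sn _; apply: card_le_trans (subset_card_le (subsetT _)) _.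
exact/infiniteP.
Qed.

(* [X] absorbs a union indexed by a set injecting into [X] of sets injecting
   into [X]: send [x] to the pair (index of [x], image of [x] in its set). *)
Lemma injle_bigcup I T (D : set I) (S : I -> set T) :
  injle D X -> (forall i, D i -> injle (S i) X) ->
  injle (\bigcup_(i in D) S i) X.
Proof.
move=> [phi [phiX phi_inj]] SX; have [p [pX p_inj]] := hessenberg Xinf.
have [[i0 Di0]|noD] := pselect (exists i, D i); last first.
  by exists (fun=> u0); split=> [x [i Di]|x y [i Di]]; case: noD; exists i.
have /choice[f fP] : forall i, exists f : T -> U, D i ->
    (forall x, S i x -> X (f x)) /\
    (forall x y, S i x -> S i y -> f x = f y -> x = y).
  move=> i; have [Di|nDi] := pselect (D i); last by exists (fun=> u0).
  by have [f fP] := SX i Di; exists f.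
have [idx idxP] : exists idx : T -> I,
    forall x, (\bigcup_(i in D) S i) x -> D (idx x) /\ S (idx x) x.
  apply: (@choice_on _ _ i0 [set q | D q.2 /\ S q.2 q.1]).
  by move=> x [i Di Six]; exists i.
exists (fun x => p (phi (idx x)) (f (idx x) x)); split.
  move=> x /idxP[Di Six]; apply: (pX); [exact: phiX|exact: (fP _ Di).1].
move=> x y /idxP[Dx Sx] /idxP[Dy Sy].
move=> /p_inj[]; [exact: phiX|exact: (fP _ Dx).1|exact: phiX|exact: (fP _ Dy).1|].
move=> /(phi_inj _ _ Dx Dy) idxE; rewrite -idxE in Sy *.
exact: (fP _ Dx).2.
Qed.

(* Lists over a set injecting into [X] inject into [X], through the code
   [[::] |-> p a a] and [x :: s |-> p b (p x s)] for distinct tags [a], [b]. *)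
Lemma injle_seq T (W : set T) : injle W X ->
  injle [set s : seq T | forall x, List.In x s -> W x] X.
Proof.
move=> [f [fX f_inj]]; have [p [pX p_inj]] := hessenberg Xinf.
have [e [eX e_inj]] := nat_embedding Xinf.
pose fix code (s : seq T) : U :=
  if s is x :: s' then p (e 1) (p (f x) (code s')) else p (e 0) (e 0).
have codeX s : (forall x, List.In x s -> W x) -> X (code s).
  elim: s => [|x s IH] Ws /=; first by apply: (pX); exact: eX.
  apply: (pX); first exact: eX.
  by apply: (pX); [apply/fX/Ws; left|apply: IH => y ys; apply: Ws; right].
have code_cons x s : (forall y, List.In y (x :: s) -> W y) ->
    X (p (f x) (code s)).
  move=> Ws; apply: (pX); first by apply: fX; apply: Ws; left.
  by apply: codeX => y ys; apply: Ws; right.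
exists code; split=> // s; elim: s => [|x s IH] [|y t] //= Ws Wt.
- by move=> /p_inj[] //; [exact: code_cons|move=> /e_inj].
- by move=> /p_inj[] //; [exact: code_cons|move=> /e_inj].
- have [Wx Ws'] : W x /\ forall z, List.In z s -> W z.
    by split=> [|z zs]; apply: (Ws); [left|right].
  have [Wy Wt'] : W y /\ forall z, List.In z t -> W z.
    by split=> [|z zt]; apply: (Wt); [left|right].
  move=> /p_inj[] //; [exact: code_cons|exact: code_cons|move=> _].
  move=> /p_inj[]; [exact: fX|exact: codeX|exact: fX|exact: codeX|].
  by move=> /f_inj-> // /IH->.
Qed.

Lemma injle_finsub T (W : set T) : injle W X ->
  injle [set F | finite_set F /\ F `<=` W] X.
Proof.
move=> WX; apply: injle_trans (injle_seq WX).
apply: injle_trans (injle_image [::] (fun s => [set x | List.In x s]) _).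
apply: injle_sub => F [/finite_enum[s sP] FW]; exists s.
  by move=> x /sP; exact: FW.
by apply/seteqP; split=> x /sP.
Qed.

Lemma injle_setU T (Y Z : set T) : injle Y X -> injle Z X ->
  injle (Y `|` Z) X.
Proof.
move=> YX ZX; pose S (b : bool) := if b then Y else Z.
have SX b : [set: bool] b -> injle (S b) X by case: b.
apply: injle_trans (injle_bigcup (finite_injle (@finite_finset bool setT)) SX).
by apply: injle_sub => x [Yx|Zx]; [exists true|exists false].
Qed.

End InfiniteTarget.

(* An infinite set injecting into neither of two sets does not inject into
   their union: the larger of the two absorbs the smaller one. *)
Lemma not_injle_setU T (B Y Z : set T) : infinite_set B ->
  ~ injle B Y -> ~ injle B Z -> ~ injle B (Y `|` Z).
Proof.
move=> Binf; have [t0 _] := infinite_setN0 Binf.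
wlog YZ : Y Z / injle Y Z.
  move=> wlog nBY nBZ; have [YZ|ZY] := injle_total t0 t0 Y Z; first exact: wlog.
  by rewrite setUC; exact: wlog.
move=> nBY nBZ BYZ; have [Zfin|Zinf] := pselect (finite_set Z).
  apply: (Binf); apply: card_le_finite ((injle_card t0).1 BYZ) _.
  by rewrite finite_setU; split=> //; exact: card_le_finite ((injle_card t0).1 YZ) Zfin.
by apply: nBZ; apply: injle_trans BYZ (injle_setU Zinf YZ (injle_refl Z)).
Qed.

Lemma list_max I T (t0 : T) (S : I -> set T) (l : seq I) : l <> [::] ->
  exists2 m, List.In m l & forall i, List.In i l -> injle (S i) (S m).
Proof.
elim: l => [//|j l IH] _; have [->|/IH[m ml lm]] := pselect (l = [::]).
  by exists j => [|i [<-|//]]; [left|exact: injle_refl].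
have [jm|mj] := injle_total t0 t0 (S j) (S m).
  by exists m => [|i [<-//|/lm//]]; right.
by exists j => [|i [<-|/lm im]]; [left|exact: injle_refl|exact: injle_trans im mj].
Qed.

Lemma not_injle_bigcup_list I T (B : set T) (S : I -> set T) (l : seq I) :
  infinite_set B -> (forall i, List.In i l -> ~ injle B (S i)) ->
  ~ injle B (\bigcup_(i in [set i | List.In i l]) S i).
Proof.
move=> Binf; elim: l => [_|j l IH nBS].
  have [b Bb] := infinite_setN0 Binf.
  by move=> [f [fB _]]; have [] := fB b Bb.
have -> : \bigcup_(i in [set i | List.In i (j :: l)]) S i =
    S j `|` \bigcup_(i in [set i | List.In i l]) S i.
  apply/seteqP; split=> [x [i [<-|il] Six]|x [Sjx|[i il Six]]].
  - by left.
  - by right; exists i.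
  - by exists j => //; left.
  - by exists i => //; right.
apply: not_injle_setU Binf (nBS j (or_introl erefl)) (IH _).
by move=> i il; apply: nBS; right.
Qed.

Section Points.
Variable L : Type.
Implicit Types (A B C : set (lpoint L)) (i : Idx L).

Fixpoint lpoint_nested_ind (P : lpoint L -> Prop)
    (HAtom : forall x, P (Atom x))
    (HTup : forall q qs, P q -> List.Forall P qs -> P (Tup q qs))
    (p : lpoint L) : P p :=
  match p with
  | Atom x => HAtom x
  | Tup q qs => HTup q qs (lpoint_nested_ind HAtom HTup q)
      ((fix all_ind (l : list (lpoint L)) : List.Forall P l :=
          match l with
          | nil => List.Forall_nil P
          | r :: rs => List.Forall_cons r (lpoint_nested_ind HAtom HTup r)
                                          (all_ind rs)
          end) qs)
  end.

Lemma supp_finite (p : lpoint L) : finite_set (supp p).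
Proof.
elim/lpoint_nested_ind: p => [x|q qs qfin qsfin] /=; first exact: finite_set1.
rewrite finite_setU; split=> //.
by elim: qsfin => [|r rs rfin _ rsfin] /=; [exact: finite_set0|rewrite finite_setU].
Qed.

Definition supports A : set L := \bigcup_(a in A) supp a.

Lemma supports_finite A : finite_set A -> finite_set (supports A).
Proof. by move=> Afin; apply: bigcup_finite => // a _; exact: supp_finite. Qed.

(* The restrictions of a finitary set are finite: their elements have
   supports among the finitely many subsets of [i]. *)
Lemma restr_finite A i : finitary A -> finite_set (restr A i).
Proof.
move=> Afin; have ifin := proj2_sig i.
apply: (@sub_finite_set _ _ (\bigcup_(j in [set j | j `<=` proj1_sig i])
   [set a | A a /\ supp a = j])); first by move=> a [Aa ai]; exists (supp a).
apply: bigcup_finite; first exact: finite_powerset.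
by move=> j ji; apply: Afin; exact: sub_finite_set ji ifin.
Qed.

Lemma restr_sub A i : restr A i `<=` A.
Proof. by move=> a []. Qed.

Lemma restr_mono A B i i' : A `<=` B -> proj1_sig i `<=` proj1_sig i' ->
  restr A i `<=` restr B i'.
Proof. by move=> AB ii' a [Aa ai]; split; [exact: AB|exact: subset_trans ai ii']. Qed.

Lemma restr_full A i : supports A `<=` proj1_sig i -> restr A i = A.
Proof.
move=> Ai; apply/seteqP; split=> [|a Aa]; first exact: restr_sub.
by split=> // x ax; apply: Ai; exists a.
Qed.

Lemma restr_stable A (W : set L) i1 i : supports A `<=` W ->
  proj1_sig i1 `<=` proj1_sig i -> proj1_sig i `&` W `<=` proj1_sig i1 ->
  restr A i = restr A i1.
Proof.
move=> AW i1i iW; apply/seteqP; split; last exact: restr_mono.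
by move=> a [Aa ai]; split=> // x ax; apply: iW; split; [exact: ai|apply: AW; exists a].
Qed.

(* Otherwise [B] would be a union, indexed by the finite subsets
   of [supports A], of finite sets, hence would inject into [A]. *)
Lemma infinite_fibre A B : infinite_set B -> ~ injle B A ->
  exists2 F, finite_set F &
    infinite_set [set b | B b /\ supp b `&` supports A = F].
Proof.
move=> Binf nBA; apply: contrapT => noF.
set W := supports A; pose fibre F := [set b | B b /\ supp b `&` W = F].
have fibre_finite F : finite_set F -> finite_set (fibre F).
  by move=> Ffin; apply: contrapT => Finf; apply: noF; exists F.
pose finW := [set F | finite_set F /\ F `<=` W].
have Bcover : B `<=` \bigcup_(F in finW) fibre F.
  move=> b Bb; exists (supp b `&` W) => //; split; last exact: subIsetr.
  exact/finite_setIl/supp_finite.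
have [Afin|Ainf] := pselect (finite_set A).
  apply: Binf; apply: sub_finite_set Bcover _; apply: bigcup_finite.
    apply: sub_finite_set (finite_powerset (supports_finite Afin)).
    by move=> F [].
  by move=> F [Ffin _]; exact: fibre_finite.
have WA : injle W A.
  apply: (injle_bigcup Ainf (injle_refl A)) => a _.
  exact (finite_injle Ainf (supp_finite a)).
apply: nBA; apply: injle_trans (injle_sub Bcover) _.
apply: (injle_bigcup Ainf (injle_finsub Ainf WA)) => F [Ffin _].
exact (finite_injle Ainf (fibre_finite F Ffin)).
Qed.

Lemma grow_index (W F : set L) C i1 n : F `<=` proj1_sig i1 ->
  infinite_set C -> (forall b, C b -> supp b `&` W = F) ->
  exists i, [/\ proj1_sig i1 `<=` proj1_sig i,
    proj1_sig i `&` W `<=` proj1_sig i1 & (`I_n #<= restr C i)%card].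
Proof.
move=> Fi1 Cinf CF; have [g [gC g_inj]] := nat_embedding Cinf.
pose i := proj1_sig i1 `|` \bigcup_(k in `I_n) supp (g k).
have ifin : finite_set i.
  rewrite finite_setU; split; first exact: proj2_sig i1.
  by apply: bigcup_finite => [|k _]; [exact: finite_II|exact: supp_finite].
exists (exist _ i ifin); split=> /=; first by move=> x; left.
  move=> x [[i1x|[k _ gkx]] Wx] //; apply: Fi1.
  by rewrite -(CF _ (gC k)); split.
apply/(injle_card (g 0)); exists g; split=> [k nk|k k' _ _ /g_inj//].
by split=> //= x gkx; right; exists k.
Qed.

End Points.

Section Approximation.
Variable L : Type.
Implicit Types (A B : set (lpoint L)) (i : Idx L).
Local Notation pair := (set (lpoint L) * set (lpoint L))%type.

Definition lt_pair (c : pair) : Prop :=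
  [/\ finitary c.1, finitary c.2 & card_lt c.1 c.2].

Definition approximable (l : seq pair) : Prop :=
  forall i0 : set L, finite_set i0 -> exists i : Idx L,
    i0 `<=` proj1_sig i /\
    forall c, List.In c l -> card_lt (restr c.1 i) (restr c.2 i).

Lemma approximable_sub (l l' : seq pair) :
  (forall c, List.In c l -> List.In c l') -> approximable l' -> approximable l.
Proof.
move=> ll' approx' i0 i0fin; have [i [i0i li]] := approx' i0 i0fin.
by exists i; split=> // c /ll'; exact: li.
Qed.

Lemma card_lt_subr A B B' : card_lt A B -> B `<=` B' -> card_lt A B'.
Proof.
move=> [AB nBA] BB'; split; first exact: card_le_trans AB (subset_card_le BB').
by move=> B'A; apply: nBA; exact: card_le_trans (subset_card_le BB') B'A.
Qed.

(* A pair of finite sets can be added: an index containing all the atoms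
   of its elements restricts it to itself. *)
Lemma approximable_cons_finite (cs : pair) (l : seq pair) :
  finite_set cs.1 -> finite_set cs.2 -> card_lt cs.1 cs.2 ->
  approximable l -> approximable (cs :: l).
Proof.
move=> cs1fin cs2fin cs12 approx i0 i0fin.
set E := supports (cs.1 `|` cs.2).
have Efin : finite_set E by apply: supports_finite; rewrite finite_setU.
have i0Efin : finite_set (i0 `|` E) by rewrite finite_setU.
have [i [i0Ei li]] := approx _ i0Efin.
have Ei : E `<=` proj1_sig i by move=> x Ex; apply: i0Ei; right.
exists i; split=> [x i0x|c [<-|/li//]]; first by apply: i0Ei; left.
rewrite !restr_full //; apply: subset_trans Ei => x [a csa ax]; exists a => //.
  by right.
by left.
Qed.

(* Otherwise [cs.2] injects into no left side,
   so by the pigeonhole principle infinitely many of its elements meet the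
   support [W] of the left sides in the same finite [F]; approximate the
   other pairs above [F], then add atoms of more such elements than [cs.1]
   has at that index: this enlarges the restriction of [cs.2] but no
   restriction of a left side. *)
Lemma approximable_cons (cs : pair) (l : seq pair) : lt_pair cs ->
  (forall c, List.In c l -> card_lt c.1 c.2 /\ injle c.2 cs.2) ->
  approximable l -> approximable (cs :: l).
Proof.
move=> [cs1fin cs2fin [cs12 ncs21]] lmax approx.
have [cs2f|cs2inf] := pselect (finite_set cs.2).
  exact: approximable_cons_finite (card_le_finite cs12 cs2f) cs2f (conj cs12 ncs21) approx.
move=> i0 i0fin.
set lhs := \bigcup_(c in [set c | List.In c (cs :: l)]) c.1.
set W := supports lhs.
have [t0 _] := infinite_setN0 cs2inf.
have nBlhs : ~ injle cs.2 lhs.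
  apply: not_injle_bigcup_list cs2inf _ => c [<-|cl] /(injle_card t0) // csc.
  have [[c12 nc21] c2cs] := lmax c cl.
  by apply: nc21; apply: card_le_trans ((injle_card t0).1 c2cs) csc.
have [F Ffin Cinf] := infinite_fibre cs2inf nBlhs.
have i0Ffin : finite_set (i0 `|` F) by rewrite finite_setU.
have [i1 [i0Fi1 li1]] := approx _ i0Ffin.
have [m cs1m] := (finite_set_leP (restr cs.1 i1)).1 (restr_finite i1 cs1fin).
have [||i [i1i iWi1 Ci]] := @grow_index _ W F _ i1 m.+1 _ Cinf.
- by move=> x Fx; apply: i0Fi1; right.
- by move=> b [].
have stable c : List.In c (cs :: l) -> restr c.1 i = restr c.1 i1.
  move=> cl; apply: restr_stable i1i iWi1 => x [a c1a ax].
  by exists a => //; exists c.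
exists i; split=> [x i0x|c cl]; first by apply/i1i/i0Fi1; left.
rewrite (stable c cl); case: cl => [<-|cl]; last first.
  by apply: card_lt_subr (li1 c cl) (restr_mono _ i1i).
have Ccs : (`I_m.+1 #<= restr cs.2 i)%card.
  by apply: card_le_trans Ci (subset_card_le _); apply: restr_mono => // b [].
split; first by apply: card_le_trans cs1m (card_le_trans _ Ccs); rewrite card_le_II.
move=> cs21; have := card_le_trans (card_le_trans Ccs cs21) cs1m.
by rewrite card_le_II ltnn.
Qed.

(* Every finite list of pairs is approximable: remove a pair with largest
   right side, approximate the rest by induction and add it back. *)
Lemma approximable_all (t0 : lpoint L) (l : seq pair) :
  (forall c, List.In c l -> lt_pair c) -> approximable l.
Proof.
elim: {l}(size l).+1 {-2}l (ltnSn (size l)) => // n IH l lsize lpair.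
have [-> i0 i0fin|lnil] := pselect (l = [::]); first by exists (exist _ i0 i0fin); split.
have [cs csl csmax] := list_max t0 snd lnil.
have [l1 [l2 lE]] := List.in_split cs l csl.
have inl' c : List.In c l -> List.In c (cs :: l1 ++ l2).
  by rewrite lE List.in_app_iff /= List.in_app_iff; tauto.
have inl c : List.In c (l1 ++ l2) -> List.In c l.
  by rewrite lE !List.in_app_iff /=; tauto.
apply: approximable_sub inl' _; apply: approximable_cons (lpair _ csl) _ _.
  by move=> c /inl cl; have [_ _ c12] := lpair c cl; split=> //; exact: csmax.
apply: IH => [|c /inl]; last exact: lpair.
by move: lsize; rewrite lE !size_cat /= addnS ltnS.
Qed.

End Approximation.

(* A family with the finite intersection property is contained in an
   ultrafilter: extend the filter of supersets of finite intersections. *)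
Lemma fip_ultrafilter T (F : set (set T)) : fip F ->
  exists U, is_ultrafilter U /\ F `<=` U.
Proof.
move=> Ffip.
pose G := [set Y : set T | exists n (X : nat -> set T),
  (forall k, (k < n)%N -> F (X k)) /\
  (forall t, (forall k, (k < n)%N -> X k t) -> Y t)].
have FG : F `<=` G by move=> Y FY; exists 1, (fun=> Y); split=> [//|t /(_ 0)]; apply.
have Gproper : ProperFilter G.
  apply: Build_ProperFilter_ex.
    by move=> Y [n [X [XF XY]]]; have [t Xt] := Ffip n X XF; exists t; apply: XY.
  split.
  - by exists 0, (fun=> setT).
  - move=> Y Z [n [X [XF XY]]] [m [X' [X'F X'Z]]].
    exists (n + m)%N, (fun k => if (k < n)%N then X k else X' (k - n)%N); split.
      move=> k knm; case: ifP => kn; first exact: XF.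
      by apply: X'F; rewrite ltn_subLR // leqNgt kn.
    move=> t Xt; split.
      by apply: XY => k kn; have := Xt k (ltn_addr _ kn); rewrite kn.
    apply: X'Z => k km; have := Xt (k + n)%N; rewrite addnC ltn_add2l.
    by move=> /(_ km); rewrite ltnNge leq_addr /= addKn.
  - by move=> Y Z YZ [n [X [XF XY]]]; exists n, X; split=> // t /XY /YZ.
have [U [Uultra GU]] := ultraFilterLemma Gproper.
exists U; split; last exact: subset_trans FG GU.
split; [exact: filterT|exact: filter_not_empty|exact: filterI| |].
  by move=> Y Z UY YZ; exact: filterS YZ UY.
by move=> Y; exact: in_ultra_setVsetC.
Qed.

Section Theorem9.
Variable L : Type.

Lemma Qfam_reduce n (X : nat -> set (Idx L)) :
  (forall k, (k < n)%N -> Qfam (X k)) ->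
  exists l (i0 : set L), [/\ finite_set i0,
    forall c, List.In c l -> lt_pair c &
    forall i : Idx L, i0 `<=` proj1_sig i ->
      (forall c, List.In c l -> card_lt (restr c.1 i) (restr c.2 i)) ->
      forall k, (k < n)%N -> X k i].
Proof.
elim: n => [|n IH] XQ; first by exists [::], set0; split=> //; exact: finite_set0.
have [l [i0 [i0fin lpair lX]]] := IH (fun k kn => XQ k (ltnW kn)).
have lastX (P : set (Idx L) -> Prop) : P (X n) -> (forall k, (k < n)%N -> P (X k)) ->
    forall k, (k < n.+1)%N -> P (X k).
  by move=> Pn Pk k; rewrite ltnS leq_eqVlt => /orP[/eqP->|/Pk].
case: (XQ n (ltnSn n)) => [[A [B [Afin Bfin AB XnE]]]|[d XnE]].
  exists ((A, B) :: l), i0; split=> // [c [<-|/lpair//]|i i0i li]; first by split.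
  apply: (lastX (fun Y => Y i)); last by apply: lX => // c cl; apply: li; right.
  by rewrite XnE; apply: (li (A, B)); left.
have i0dfin : finite_set (i0 `|` proj1_sig d).
  by rewrite finite_setU; split=> //; exact: proj2_sig d.
exists l, (i0 `|` proj1_sig d); split=> // i i0di li; apply: (lastX (fun Y => Y i)).
  by rewrite XnE => x dx; apply: i0di; right.
by apply: lX => // x i0x; apply: i0di; left.
Qed.

Lemma fip_Qfam (t0 : lpoint L) : fip (@Qfam L).
Proof.
move=> n X XQ; have [l [i0 [i0fin lpair lX]]] := Qfam_reduce XQ.
have [i [i0i li]] := approximable_all t0 lpair i0fin.
by exists i; exact: lX.
Qed.

(* Weak Hume Principle: if [A] is not injected into [B], then [|B| < |A|]
   by comparability, so [Qlt B A] and [A <=_U B] would both be in [U]. *)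
Lemma weak_hume (t0 : lpoint L) (U : set (set (Idx L))) A B :
  is_ultrafilter U -> @Qfam L `<=` U -> finitary A -> finitary B ->
  num_le U A B -> injle A B.
Proof.
move=> [_ U0 UI US _] QU Afin Bfin AB; apply: contrapT => nAB.
have [//|BA] := injle_total t0 t0 A B.
have UBA : U (Qlt B A).
  apply: QU; left; exists B, A; split=> //.
  by split=> [|/(injle_card t0)//]; exact/(injle_card t0).
by apply: U0; apply: US (UI _ _ AB UBA) _ => i [iAB [_ niBA]]; exact: niBA.
Qed.

End Theorem9.

Theorem mainTheorem9 (L : Type) (HL : ~ finite_set [set: L]) :
  [/\ fip (@Qfam L),
      (exists U : set (set (Idx L)),
          [/\ is_ultrafilter U, fine U & @Qfam L `<=` U])
    & (forall U : set (set (Idx L)),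
          is_ultrafilter U -> fine U -> @Qfam L `<=` U ->
          forall A B : set (lpoint L), finitary A -> finitary B ->
            num_le U A B ->
            exists f : lpoint L -> lpoint L,
              (forall a, A a -> B (f a)) /\
              (forall a a', A a -> A a' -> f a = f a' -> a = a'))].
Proof.
have [x0 _] := infinite_setN0 HL; pose t0 := Atom x0.
have Qfip := fip_Qfam t0.
split=> // [|U Uultra _ QU A B Afin Bfin AB].
  have [U [Uultra QU]] := fip_ultrafilter Qfip.
  by exists U; split=> // d; apply: QU; right; exists d.
exact: weak_hume Uultra QU Afin Bfin AB.
Qed.
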